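(* For polarization $a$, intensity $\mu>0$ and flag $z$, let $\sigma_{(a,\mu,z)}=\sum_{N=0}^\infty e^{-\mu}\frac{\mu^N}{N!}|N\rangle\langle N|_a$ and $$\xi_{(a,\mu,z)}=\sum_{N=0}^{N_{\mathrm{decoy}}}e^{-\mu}\frac{\mu^N}{N!}|N\rangle\langle N|_a+\Big(1-\sum_{N=0}^{N_{\mathrm{decoy}}}e^{-\mu}\frac{\mu^N}{N!}\Big)|a,\mu\rangle\langle a,\mu|,$$ where $\{|a,\mu\rangle\}_{a,\mu}$ is an orthonormal set orthogonal to the span of all $|N\rangle_a$ with $N\le N_{\mathrm{decoy}}$. Then there is a channel $\Psi_{\mathrm{tag}}$ with $\Psi_{\mathrm{tag}}[\xi_{(a,\mu,z)}]=\sigma_{(a,\mu,z)}$ for all setting choices $(a,\mu,z)$.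
   Context: $|N\rangle_a$ denotes the Fock state of $N$ photons all with polarization $a$ (from a finite set of polarizations); the set of intensities is finite; $N_{\mathrm{decoy}}\in\mathbb N$. *)

From HB Require Import structures.
From mathcomp Require Import all_boot all_order all_algebra.
From mathcomp Require Import complex.
From mathcomp Require Import all_classical all_reals all_analysis.

Set Implicit Arguments.
Unset Strict Implicit.
Unset Printing Implicit Defensive.
Import Order.TTheory GRing.Theory Num.Theory.
Local Open Scope classical_set_scope.
Local Open Scope ring_scope.
Local Open Scope complex_scope.

Section Defs.
Variable R : realType.
Local Notation C := (R[i]).

Definition rsummable (T : choiceType) (f : T -> R) : Prop :=
  summable [set: T] (fun t => (f t)%:E).

Definition rsum (T : choiceType) (f : T -> R) : R :=
  fine (\esum_(t in [set: T]) (Num.max (f t) 0)%:E)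
  - fine (\esum_(t in [set: T]) (Num.max (- f t) 0)%:E).

Definition csummable (T : choiceType) (f : T -> C) : Prop :=
  rsummable (fun t => complex.Re (f t)) /\ rsummable (fun t => complex.Im (f t)).

Definition csum (T : choiceType) (f : T -> C) : C :=
  Complex (rsum (fun t => complex.Re (f t))) (rsum (fun t => complex.Im (f t))).

(* Output: two-mode (H/V) Fock space, basis |n_H, n_V>. *)
Definition Out := (nat * nat)%type.

(* Input: the Fock space plus extra orthonormal vectors |a,mu>, indexed by
   (polarization, intensity), orthogonal to the whole Fock space. *)
Definition In (A M : finType) := (Out + (A * M))%type.

(* Operators are given by their matrix entries <x| rho |y>. *)

(* A polarization is a Jones vector (alpha, beta) in C^2; the N-photon Fock
   state of that polarization is
   |N>_a = (alpha a_H^dag + beta a_V^dag)^N / sqrt(N!) |vac>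
         = sum_k sqrt(C(N,k)) alpha^k beta^(N-k) |k, N-k>.
   fock_coef p N x = <x | N>_p. *)
Definition fock_coef (p : C * C) (N : nat) (x : Out) : C :=
  if (x.1 + x.2)%N == N then
    (Num.sqrt ('C(N, x.1))%:R : R)%:C * p.1 ^+ x.1 * p.2 ^+ x.2
  else 0.

Definition fock_proj (p : C * C) (N : nat) (x y : Out) : C :=
  fock_coef p N x * conjc (fock_coef p N y).

Definition poisson (mu : R) (N : nat) : R :=
  expR (- mu) * mu ^+ N / (N`!)%:R.

(* sigma_(a,mu) = sum_{N >= 0} poisson mu N |N><N|_a.  Entrywise, the term N
   vanishes unless N = x.1 + x.2, so the series reduces to the finite sum
   below (all omitted terms are 0). *)
Definition sigma_state (p : C * C) (mu : R) (x y : Out) : C :=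
  \sum_(N < (x.1 + x.2).+1) (poisson mu N)%:C * fock_proj p N x y.

Definition xi_state (A M : finType) (pol : A -> C * C) (mu : M -> R)
    (Nd : nat) (a : A) (m : M) (u v : In A M) : C :=
  match u, v with
  | inl x, inl y =>
      \sum_(N < Nd.+1) (poisson (mu m) N)%:C * fock_proj (pol a) N x y
  | inr b, inr c =>
      if (b == (a, m)) && (c == (a, m)) then
        (1 - \sum_(N < Nd.+1) poisson (mu m) N)%:C
      else 0
  | _, _ => 0
  end.

(* A (countable) Kraus family K_k : In -> Out, given by matrix entries
   K k x u = <x| K_k |u>. It defines a quantum channel (CPTP map) iff
   sum_k K_k^dag K_k = Id, i.e. for all basis vectors u, v of the input,
   sum_{k, x} conj(<x|K_k|u>) <x|K_k|v> = delta_{u v}. *)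
Definition kraus_TP (I T : choiceType) (K : nat -> T -> I -> C) : Prop :=
  forall u v : I,
    csummable (fun kx : nat * T => conjc (K kx.1 kx.2 u) * K kx.1 kx.2 v) /\
    csum (fun kx : nat * T => conjc (K kx.1 kx.2 u) * K kx.1 kx.2 v)
      = (u == v)%:R.

(* Summand of <x| Psi[rho] |y> = sum_k sum_{u,v} <x|K_k|u> <u|rho|v> conj(<y|K_k|v>) *)
Definition kraus_term (I T : choiceType) (K : nat -> T -> I -> C)
    (rho : I -> I -> C) (x y : T) (kuv : nat * I * I) : C :=
  K kuv.1.1 x kuv.1.2 * rho kuv.1.2 kuv.2 * conjc (K kuv.1.1 y kuv.2).

Definition kraus_apply (I T : choiceType) (K : nat -> T -> I -> C)
    (rho : I -> I -> C) (x y : T) : C :=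
  csum (kraus_term K rho x y).

End Defs.

From HB Require Import structures.
From mathcomp Require Import all_boot all_order all_algebra.
From mathcomp Require Import complex.
From mathcomp Require Import all_classical all_reals all_analysis.
From mathcomp Require Import ring.

(* The tagging channel leaves the Fock part of xi untouched (Kraus operator:
   the projection onto the Fock space) and replaces each extra vector |a,mu>
   by the renormalised Poisson tail, through the Kraus operators
   w_N |N>_a <a,mu| for N > N_decoy, where
   w_N^2 = e^{-mu} mu^N / N! / (1 - sum_{N' <= N_decoy} e^{-mu} mu^N' / N'!).
   Trace preservation on |a,mu> is sum_N w_N^2 = 1, i.e. the Poisson weights
   sum to 1; applied to xi, the weight 1 - sum_{N' <= N_decoy} ... of |a,mu>
   is turned into exactly the missing terms N > N_decoy of sigma. *)
Set Implicit Arguments.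
Unset Strict Implicit.
Unset Printing Implicit Defensive.
Import Order.TTheory GRing.Theory Num.Theory.
Import numFieldNormedType.Exports.
Local Open Scope classical_set_scope.
Local Open Scope ring_scope.
Local Open Scope complex_scope.

Section FiniteSupport.
Variable R : realType.
Local Notation C := R[i].

Lemma esum_fin_support (T : choiceType) (g : T -> R) (s : seq T) :
  uniq s -> (forall t, t \notin s -> g t = 0) -> (forall t, 0 <= g t) ->
  (\esum_(t in [set: T]) (g t)%:E = (\sum_(t <- s) g t)%:E)%E.
Proof.
move=> s_uniq g0 g_ge0.
transitivity (\esum_(t in [set` s]) (g t)%:E)%E.
  rewrite [RHS]esum_mkcond; apply: eq_esum => t _.
  by case: ifPn => // /negP; rewrite inE /= => /negP /g0 ->.
rewrite esum_fset; first by rewrite -fsbig_seq // sumEFin.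
- exact: finite_seq.
- by move=> t _; rewrite lee_fin.
Qed.

Lemma rsum_fin_support (T : choiceType) (g : T -> R) (s : seq T) :
  uniq s -> (forall t, t \notin s -> g t = 0) ->
  rsummable g /\ rsum g = \sum_(t <- s) g t.
Proof.
move=> s_uniq g0; have max_ge0 (r : R) : 0 <= Num.max r 0 by rewrite le_max lexx orbT.
split.
  rewrite /rsummable /summable; under eq_esum do rewrite abse_EFin.
  rewrite (@esum_fin_support _ (fun t => `|g t|) s) ?ltry // => t.
  by move=> /g0 ->; rewrite normr0.
rewrite /rsum (@esum_fin_support _ (fun t => Num.max (g t) 0) s) //; last first.
  by move=> t /g0 ->; rewrite maxxx.
rewrite (@esum_fin_support _ (fun t => Num.max (- g t) 0) s) //; last first.
  by move=> t /g0 ->; rewrite oppr0 maxxx.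
rewrite /= -sumrB; apply: eq_bigr => t _.
have [g_ge0|g_lt0] := leP 0 (g t).
  suff -> : Num.max (- g t) 0 = 0 by rewrite subr0.
  by apply/max_idPr; rewrite oppr_le0.
suff -> : Num.max (- g t) 0 = - g t by rewrite sub0r opprK.
by apply/max_idPl; rewrite oppr_ge0 ltW.
Qed.

Lemma csum_fin_support (T : choiceType) (f : T -> C) (s : seq T) :
  uniq s -> (forall t, t \notin s -> f t = 0) ->
  csummable f /\ csum f = \sum_(t <- s) f t.
Proof.
move=> s_uniq f0.
have [Re_summable Re_sum] := @rsum_fin_support _ (fun t => complex.Re (f t)) s s_uniq
  (fun t t_s => ltac:(by rewrite /= f0)).
have [Im_summable Im_sum] := @rsum_fin_support _ (fun t => complex.Im (f t)) s s_uniq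
  (fun t t_s => ltac:(by rewrite /= f0)).
split=> //; rewrite /csum Re_sum Im_sum.
elim: s {s_uniq f0 Re_sum Im_sum} => [|t s IHs]; first by rewrite !big_nil.
by rewrite !big_cons -IHs; case: (f t).
Qed.

Lemma csum_fin_support_eq (T : choiceType) (f : T -> C) (s : seq T) (v : C) :
  uniq s -> (forall t, t \notin s -> f t = 0) -> \sum_(t <- s) f t = v ->
  csummable f /\ csum f = v.
Proof. by move=> s_uniq f0 <-; exact: csum_fin_support. Qed.

Lemma csum_nneg_real (T : choiceType) (f : T -> C) (r : T -> R) (v : R) :
  (forall t, f t = (r t)%:C) -> (forall t, 0 <= r t) ->
  (\esum_(t in [set: T]) (r t)%:E = v%:E)%E ->
  csummable f /\ csum f = v%:C.
Proof.
move=> fE r_ge0 r_esum.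
have ReE t : complex.Re (f t) = r t by rewrite fE.
have [Im_summable Im_sum] := @rsum_fin_support _ (fun t => complex.Im (f t)) [::] erefl
  (fun t _ => ltac:(by rewrite /= fE)).
split.
  split=> //; rewrite /rsummable /summable.
  by under eq_esum do rewrite ReE abse_EFin ger0_norm //; rewrite r_esum ltry.
rewrite /csum Im_sum big_nil /rsum.
under eq_esum do rewrite ReE (max_idPl (r_ge0 _)).
under [X in _ - fine X]eq_esum do rewrite ReE (max_idPr _) ?oppr_le0 //.
by rewrite r_esum esum1 //= subr0.
Qed.

End FiniteSupport.

Section Poisson.
Variable R : realType.
Implicit Types (mu : R) (n N : nat).

Lemma poisson_ge0 mu N : 0 <= mu -> 0 <= poisson mu N.
Proof. by move=> mu_ge0; rewrite /poisson !mulr_ge0 ?expR_ge0 ?exprn_ge0 ?invr_ge0. Qed.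

Lemma poisson_gt0 mu N : 0 < mu -> 0 < poisson mu N.
Proof.
by move=> mu_gt0; rewrite /poisson !mulr_gt0 ?expR_gt0 ?exprn_gt0 ?invr_gt0 ?ltr0n ?fact_gt0.
Qed.

Definition poisson_cdf mu n : R := \sum_(N < n) poisson mu N.

Lemma cvg_poisson_cdf mu : poisson_cdf mu n @[n --> \oo] --> (1 : R).
Proof.
have -> : poisson_cdf mu = fun n => expR (- mu) * series (exp_coeff mu) n.
  apply/funext => n; rewrite /poisson_cdf /series /= mulr_sumr big_mkord.
  by apply: eq_bigr => N _; rewrite /poisson /exp_coeff /= mulrA.
rewrite -(mulVf (lt0r_neq0 (expR_gt0 mu))) -expRN.
by apply: cvgMl_tmp; exact: is_cvg_series_exp_coeff.
Qed.

Lemma poisson_cdf_lt1 mu n : 0 < mu -> poisson_cdf mu n < 1.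
Proof.
move=> mu_gt0; have cdf_homo : {homo poisson_cdf mu : n m / (n <= m)%N >-> n <= m}.
  move=> n1 n2 n12; rewrite /poisson_cdf -!(big_mkord xpredT).
  rewrite (big_cat_nat (leq0n n1) n12) /= lerDl.
  by apply: sumr_ge0 => N _; rewrite poisson_ge0 // ltW.
have := nondecreasing_cvgn_le cdf_homo (cvgP _ (cvg_poisson_cdf mu)) n.+1.
rewrite (cvg_lim _ (cvg_poisson_cdf mu)) //; apply: lt_le_trans.
by rewrite /poisson_cdf big_ord_recr /= ltrDl poisson_gt0.
Qed.

End Poisson.

Section TailWeight.
Variables (R : realType) (mu : R) (Nd : nat).
Hypothesis mu_gt0 : 0 < mu.

Let tail_mass := 1 - poisson_cdf mu Nd.+1.

Let tail_mass_gt0 : 0 < tail_mass.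
Proof. by rewrite subr_gt0 poisson_cdf_lt1. Qed.

Definition tail_weight (N : nat) : R :=
  if (Nd < N)%N then Num.sqrt (poisson mu N / tail_mass) else 0.

Lemma tail_weight_sqr N :
  tail_weight N ^+ 2 = if (Nd < N)%N then poisson mu N / tail_mass else 0.
Proof.
rewrite /tail_weight; case: ifP => _; last by rewrite expr0n.
by rewrite sqr_sqrtr // divr_ge0 ?poisson_ge0 ?ltW.
Qed.

Lemma tail_weight_sqr_mass N :
  tail_weight N ^+ 2 * tail_mass = if (Nd < N)%N then poisson mu N else 0.
Proof.
by rewrite tail_weight_sqr; case: ifP; rewrite ?mul0r ?divfK ?lt0r_neq0.
Qed.

Lemma esum_tail_weight_sqr :
  (\esum_(N in [set: nat]) (tail_weight N ^+ 2)%:E = 1%:E)%E.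
Proof.
rewrite -nneseries_esumT => [|N]; last by rewrite lee_fin sqr_ge0.
pose s n := \sum_(0 <= N < n) tail_weight N ^+ 2.
have -> : (fun n => \sum_(0 <= N < n) (tail_weight N ^+ 2)%:E)%E = EFin \o s.
  by apply/funext => n; rewrite /= sumEFin.
have sE n : (Nd.+1 <= n)%N ->
    s n = (poisson_cdf mu n - poisson_cdf mu Nd.+1) / tail_mass.
  move=> Nd_n; rewrite /s /poisson_cdf -!(big_mkord xpredT).
  rewrite !(big_cat_nat (leq0n _) Nd_n) /= [X in _ = X / _]addrC addKr.
  rewrite [X in X + _]big_nat big1 ?add0r => [|N /andP[_ N_Nd]]; last first.
    by rewrite tail_weight_sqr ltnNge -ltnS N_Nd.
  rewrite mulr_suml !big_nat; apply: eq_bigr => N /andP[Nd_N _].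
  by rewrite tail_weight_sqr Nd_N.
suff s_cvg : s n @[n --> \oo] --> (1 : R).
  by rewrite EFin_lim ?(cvg_lim _ s_cvg) //; exact: cvgP s_cvg.
have cdf_cvg : (poisson_cdf mu n - poisson_cdf mu Nd.+1) / tail_mass
    @[n --> \oo] --> (1 : R).
  rewrite -[X in _ --> X](mulfV (lt0r_neq0 tail_mass_gt0)).
  by apply: cvgMr_tmp; apply: cvgB; [exact: cvg_poisson_cdf | exact: cvg_cst].
apply: cvg_trans cdf_cvg; apply: near_eq_cvg; near=> n.
by rewrite sE //; near: n; exists Nd.+1.
Unshelve. all: by end_near.
Qed.

End TailWeight.

Section FockState.
Variable R : realType.
Local Notation C := R[i].
Implicit Types (p : C * C) (N : nat) (x y : Out).

Definition sqnormc (z : C) : R := complex.Re z ^+ 2 + complex.Im z ^+ 2.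

Lemma sqnormc_ge0 z : 0 <= sqnormc z.
Proof. by rewrite addr_ge0 ?sqr_ge0. Qed.

Lemma conjcM_self z : conjc z * z = (sqnormc z)%:C.
Proof. by case: z => a b; simpc; rewrite [b * a]mulrC subrr -!expr2. Qed.

Lemma fock_coef_eq0 p N x : (x.1 + x.2 != N)%N -> fock_coef p N x = 0.
Proof. by rewrite /fock_coef => /negPf ->. Qed.

Definition fock_support N : seq Out := [seq (j, N - j)%N | j <- iota 0 N.+1].

Lemma fock_support_uniq N : uniq (fock_support N).
Proof. by rewrite map_inj_uniq ?iota_uniq // => j j' []. Qed.

Lemma mem_fock_support N x : (x \in fock_support N) = (x.1 + x.2 == N)%N.
Proof.
apply/mapP/eqP => [[j j_N ->] | <-]; last first.
  by exists x.1; [rewrite mem_iota ltnS leq_addr | rewrite addKn; case: x].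
by rewrite mem_iota ltnS in j_N; rewrite /= subnKC.
Qed.
Lemma fock_coef_norm p N : p.1 * conjc p.1 + p.2 * conjc p.2 = 1 ->
  \sum_(x <- fock_support N) conjc (fock_coef p N x) * fock_coef p N x = 1.
Proof.
move=> p_unit; have {}p_unit : conjc p.2 * p.2 + conjc p.1 * p.1 = 1.
  by rewrite addrC mulrC [conjc p.2 * _]mulrC.
rewrite big_map -[iota 0 N.+1]/(index_iota 0 N.+1) big_mkord -(expr1n _ N) -p_unit exprDn.
apply: eq_bigr => j _; have j_N : (j <= N)%N by rewrite -ltnS.
rewrite /fock_coef /= subnKC // eqxx.
set s := Num.sqrt _; have s_sqr : s%:C * s%:C = 'C(N, j)%:R.
  by rewrite -rmorphM -expr2 sqr_sqrtr ?ler0n // rmorph_nat.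
rewrite !rmorphM !rmorphXn /= oppr0 complexr0 -mulr_natl -s_sqr !exprMn; ring.
Qed.

Lemma esum_sqnormc_fock p N (c : R) : p.1 * conjc p.1 + p.2 * conjc p.2 = 1 ->
  (\esum_(x in [set: Out]) (sqnormc (c%:C * fock_coef p N x))%:E = (c ^+ 2)%:E)%E.
Proof.
move=> p_unit; rewrite (@esum_fin_support _ _ (fun x => sqnormc (c%:C * fock_coef p N x))
  (fock_support N)); last 3 first.
- exact: fock_support_uniq.
- by move=> x; rewrite mem_fock_support => /fock_coef_eq0 ->; rewrite mulr0 /sqnormc expr0n addr0.
- by move=> x; exact: sqnormc_ge0.
congr (_%:E); apply: (@complexI R); rewrite raddf_sum /=.
under eq_bigr do rewrite -conjcM_self rmorphM /= oppr0 complexr0 mulrACA.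
by rewrite -mulr_sumr fock_coef_norm // mulr1 expr2 rmorphM.
Qed.

Lemma big_fock_proj p (F : nat -> C) n x y :
  \sum_(N < n) F N * fock_proj p N x y =
  if (x.1 + x.2 < n)%N then F (x.1 + x.2)%N * fock_proj p (x.1 + x.2) x y else 0.
Proof.
have term0 N : (N != x.1 + x.2)%N -> F N * fock_proj p N x y = 0.
  by move=> N_x; rewrite /fock_proj fock_coef_eq0 ?mul0r ?mulr0 // eq_sym.
case: ifPn => [x_n | ]; last first.
  by rewrite -leqNgt => n_x; rewrite big1 // => N _; rewrite term0 // neq_ltn (leq_trans _ n_x).
rewrite (bigD1 (Ordinal x_n)) //= big1 ?addr0 // => N N_x; apply: term0.
by apply: contra N_x => /eqP N_x; apply/eqP/val_inj.
Qed.

End FockState.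

Lemma kraus_termE (R : realType) (I T : choiceType) (K : nat -> T -> I -> R[i])
    (rho : I -> I -> R[i]) x y k u v :
  kraus_term K rho x y (k, u, v) = K k x u * rho u v * conjc (K k y v).
Proof. by []. Qed.

Section TaggingChannel.
Variables (R : realType) (A M : finType) (pol : A -> R[i] * R[i]) (mu : M -> R).
Variable Nd : nat.
Local Notation C := R[i].
Local Notation w b := (tail_weight (mu b.2) Nd).

Definition tag_index (bN : (A * M) * nat) : nat := (pickle bN).+1.

Lemma tag_index_inj : injective tag_index.
Proof. by move=> bN bN' [] /(pcan_inj pickleK_inv). Qed.

(* Kraus index 0 is the projection onto the Fock space and index
   [tag_index (b, N)] is w_N |N>_a <b|, for b = (a, m). *)
Definition tag_kraus (k : nat) (x : Out) (u : In A M) : C :=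
  match k, u with
  | 0, inl y => (x == y)%:R
  | k.+1, inr b =>
    if @pickle_inv ((A * M) * nat)%type k is Some (b', N) then
      (b' == b)%:R * (w b N)%:C * fock_coef (pol b.1) N x
    else 0
  | _, _ => 0
  end.

Lemma tag_kraus_inl k x y : tag_kraus k x (inl y) = ((k == 0) && (x == y))%:R.
Proof. by case: k. Qed.

Lemma tag_kraus_inr k x b : tag_kraus k x (inr b) =
  if k == tag_index (b, x.1 + x.2)%N then
    (w b (x.1 + x.2)%N)%:C * fock_coef (pol b.1) (x.1 + x.2) x
  else 0.
Proof.
case: k => [|k] //=; rewrite eqSS.
case k_inv: pickle_inv => [[b' N]|]; last first.
  by case: eqP k_inv => // ->; rewrite pickleK_inv.
have -> : k = pickle (b', N) by have := @pickle_invK ((A * M) * nat)%type k; rewrite k_inv.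
rewrite (inj_eq (pcan_inj pickleK_inv)) xpair_eqE eq_sym.
have [<- /=|_] := eqVneq b' b; last by rewrite !mul0r.
rewrite mul1r; have [<-|N_x] := eqVneq N (x.1 + x.2)%N; first by [].
by rewrite fock_coef_eq0 ?mulr0 // eq_sym.
Qed.

Lemma tag_kraus_index b N x :
  tag_kraus (tag_index (b, N)) x (inr b) = (w b N)%:C * fock_coef (pol b.1) N x.
Proof.
rewrite tag_kraus_inr (inj_eq tag_index_inj) xpair_eqE eqxx /=.
have [<-|N_x] := eqVneq (x.1 + x.2)%N N; first by [].
by rewrite fock_coef_eq0 ?mulr0.
Qed.

Lemma tag_kraus_inr_eq0 k x b :
  (forall N, k != tag_index (b, N)) -> tag_kraus k x (inr b) = 0.
Proof. by move=> k_b; rewrite tag_kraus_inr (negPf (k_b _)). Qed.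

Hypothesis pol_unit :
  forall a, (pol a).1 * conjc (pol a).1 + (pol a).2 * conjc (pol a).2 = 1.
Hypothesis mu_gt0 : forall m, 0 < mu m.

Lemma tag_kraus_TP_inr b :
  let f kx := conjc (tag_kraus kx.1 kx.2 (inr b)) * tag_kraus kx.1 kx.2 (inr b) in
  csummable f /\ csum f = 1.
Proof.
apply: (@csum_nneg_real _ _ _ (fun kx => sqnormc (tag_kraus kx.1 kx.2 (inr b)))).
- by move=> kx; rewrite conjcM_self.
- by move=> kx; exact: sqnormc_ge0.
have -> : [set: nat * Out] = [set: nat] `*`` (fun=> [set: Out]) by apply/seteqP.
rewrite -(esum_esum (a := fun k x => (sqnormc (tag_kraus k x (inr b)))%:E)); last first.
  by move=> *; rewrite lee_fin sqnormc_ge0.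
transitivity (\esum_(k in range (fun N => tag_index (b, N)))
    \esum_(x in [set: Out]) (sqnormc (tag_kraus k x (inr b)))%:E)%E.
  rewrite [RHS]esum_mkcond; apply: eq_esum => k _; case: ifPn => // k_b.
  apply: esum1 => x _; rewrite tag_kraus_inr_eq0 /sqnormc ?expr0n ?addr0 // => N.
  by apply: contra k_b => /eqP ->; rewrite inE; exists N.
rewrite esum_image; last by move=> N N' _ _ /tag_index_inj [].
under eq_esum do under eq_esum do rewrite tag_kraus_index.
under eq_esum do rewrite esum_sqnormc_fock //.
exact: esum_tail_weight_sqr.
Qed.

Lemma tag_kraus_TP : kraus_TP tag_kraus.
Proof.
have inl_inr k x y b : tag_kraus k x (inl y) = 0 \/ tag_kraus k x (inr b) = 0.
  by case: k => [|k]; [right | left; rewrite tag_kraus_inl].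
move=> [y|b] [y'|b'].
- apply: (@csum_fin_support_eq _ _ _ [:: (0%N, y)]) => // [[k x]|].
    by rewrite inE /= !tag_kraus_inl xpair_eqE => /negPf ->; rewrite rmorph0 mul0r.
  by rewrite big_seq1 !tag_kraus_inl !eqxx rmorph1 mul1r.
- apply: (@csum_fin_support_eq _ _ _ [::]); [by [] | move=> kx _ | by rewrite big_nil].
  by case: (inl_inr kx.1 kx.2 y b') => ->; rewrite ?rmorph0 ?mul0r ?mulr0.
- apply: (@csum_fin_support_eq _ _ _ [::]); [by [] | move=> kx _ | by rewrite big_nil].
  by case: (inl_inr kx.1 kx.2 y' b) => ->; rewrite ?rmorph0 ?mul0r ?mulr0.
have [<-|b_b'] := eqVneq b b'; first by rewrite eqxx; exact: tag_kraus_TP_inr.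
apply: (@csum_fin_support_eq _ _ _ [::]) => //= [[k x] _|]; last first.
  by rewrite big_nil -[_ == _]/(b == b') (negPf b_b').
rewrite !tag_kraus_inr /=; case: eqP => [->|]; last by rewrite rmorph0 mul0r.
by rewrite (inj_eq tag_index_inj) xpair_eqE (negPf b_b') mulr0.
Qed.

Lemma tag_kraus_apply a m x y :
  csummable (kraus_term tag_kraus (xi_state pol mu Nd a m) x y) /\
  kraus_apply tag_kraus (xi_state pol mu Nd a m) x y = sigma_state (pol a) (mu m) x y.
Proof.
set n := (x.1 + x.2)%N; set b := (a, m).
apply: (@csum_fin_support_eq _ _ _
    [:: (0%N, inl x, inl y); (tag_index (b, n), inr b, inr b)]) => //.
  move=> [[k u] v]; rewrite !inE negb_or => /andP[kuv_0 kuv_b].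
  rewrite kraus_termE; case: u v kuv_0 kuv_b => [x'|b'] [y'|b''] kuv_0 kuv_b.
  - rewrite !tag_kraus_inl; case: (k =P 0) => [k0|_]; last by rewrite !mul0r.
    case: (x =P x') => [ex|_]; last by rewrite !mul0r.
    case: (y =P y') => [ey|_]; last by rewrite rmorph0 mulr0.
    by rewrite k0 -ex -ey eqxx in kuv_0.
  - by rewrite mulr0 mul0r.
  - by rewrite mulr0 mul0r.
  rewrite /xi_state -/b; case: (b' =P b) kuv_b => [->|_ _]; last by rewrite mulr0 mul0r.
  case: (b'' =P b) => [-> kuv_b|_ _]; last by rewrite mulr0 mul0r.
  rewrite tag_kraus_inr -/n; case: eqP => [k_b|_]; last by rewrite !mul0r.
  by rewrite k_b eqxx in kuv_b.
rewrite big_cons big_seq1 !kraus_termE !tag_kraus_inl !eqxx !tag_kraus_index.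
rewrite /xi_state /sigma_state !(big_fock_proj _ (fun N => (poisson (mu m) N)%:C)).
rewrite -/n -/b ltnSn eqxx !andbT !mulr1n rmorph1 mul1r mulr1.
have -> : (w b n)%:C * fock_coef (pol a) n x * (1 - poisson_cdf (mu m) Nd.+1)%:C *
    conjc ((w b n)%:C * fock_coef (pol a) n y) =
    (w b n ^+ 2 * (1 - poisson_cdf (mu m) Nd.+1))%:C * fock_proj (pol a) n x y.
  by rewrite /fock_proj rmorphM /= oppr0 complexr0 !rmorphM /=; ring.
rewrite tail_weight_sqr_mass // ltnS leqNgt.
by case: (Nd < n)%N; rewrite ?mul0r ?add0r ?addr0.
Qed.

End TaggingChannel.

Theorem mainTheorem11 (R : realType) (A M : finType)
    (pol : A -> R[i] * R[i])
    (pol_unit : forall a, (pol a).1 * conjc (pol a).1 + (pol a).2 * conjc (pol a).2 = 1)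
    (mu : M -> R) (mu_pos : forall m, 0 < mu m) (mu_inj : injective mu)
    (Ndecoy : nat) :
  exists K : nat -> Out -> In A M -> R[i],
    kraus_TP K /\
    forall (a : A) (m : M) (x y : Out),
      csummable (kraus_term K (xi_state pol mu Ndecoy a m) x y) /\
      kraus_apply K (xi_state pol mu Ndecoy a m) x y = sigma_state (pol a) (mu m) x y.
Proof.
exists (tag_kraus pol mu Ndecoy); split; first exact: tag_kraus_TP.
by move=> a m x y; exact: tag_kraus_apply.
Qed.
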